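(* Let $\mathcal S$ be a finite subset of the unit sphere $\mathbb S^{n-1}\subset\mathbb R^n$ such that $\mathrm{Span}_{\mathbb R}\mathcal S=\mathbb R^n$ and $-v\in\mathcal S$ whenever $v\in\mathcal S$. Then there exist a basis $\mathcal B$ of $\mathbb R^n$ contained in $\mathcal S$ and linear maps $F:\mathbb R^n\to\mathbb R^n$ arbitrarily close to the identity such that for all $v\in\mathcal S$: $|Fv|=|v|$ if $v\in\mathcal B$ or $-v\in\mathcal B$, and $|Fv|>|v|$ otherwise.
   Context: $|\cdot|$ is the euclidean norm on $\mathbb R^n$. *)

(* R^n is modelled as row vectors 'rV[R]_n over an
   arbitrary real closed field R (the statement is first-order, so this is
   a generalization of the real case by Tarski transfer). *)
From HB Require Import structures.
From mathcomp Require Import all_boot all_order all_algebra.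
Set Implicit Arguments. Unset Strict Implicit. Unset Printing Implicit Defensive.
Import Order.TTheory GRing.Theory Num.Theory.
Local Open Scope ring_scope.

Definition enorm (R : rcfType) (n : nat) (v : 'rV[R]_n) : R :=
  Num.sqrt (\sum_(i < n) (v 0 i) ^+ 2).

From HB Require Import structures.
From mathcomp Require Import all_boot all_order all_algebra.
Set Implicit Arguments. Unset Strict Implicit. Unset Printing Implicit Defensive.
Import Order.TTheory GRing.Theory Num.Theory.
Local Open Scope ring_scope.

(* Write vectors as rows and let M be a matrix whose rows
   b_1, ..., b_n are taken from S, chosen with |det M| minimal among all
   nonzero determinants of such matrices.  Replacing b_k by v in S multiplies
   det M by the k-th coordinate c_k of v in the basis (b_k), so every nonzero
   coordinate satisfies |c_k| >= 1; hence |c|^2 > 1 for every unit v in S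
   which is not +-b_k.
   Let z_k = b'_k - b_k, where b'_1, ..., b'_n is the dual basis (the rows
   of M^-T).  Since b_k . b'_k = 1 = b_k . b_k, z_k is orthogonal to b_k, so
   the normalised tilted vectors w_k = (b_k + s z_k) / |b_k + s z_k| are unit
   vectors.  The linear map F_s sending b_k to w_k fixes the norms of the
   +-b_k, and for v = c M we get |v F_s|^2 = 1 + 2 s (|c|^2 - 1) + O(s^2) > 1
   when s > 0 is small, while F_s tends to the identity as s -> 0.
   The file develops the inner product, the "for all small enough s" filter,
   the minimal frame, the deformation F_s, and finally the theorem. *)

Section InnerProduct.
Variables (R : rcfType) (n : nat).
Implicit Types x y z v : 'rV[R]_n.

Definition dot x y : R := (x *m y^T) 0 0.

Lemma dotE x y : dot x y = \sum_l x 0 l * y 0 l.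
Proof. by rewrite /dot mxE; apply: eq_bigr => l _; rewrite mxE. Qed.

Lemma dotC x y : dot x y = dot y x.
Proof. by rewrite !dotE; apply: eq_bigr => l _; rewrite mulrC. Qed.

Lemma dotDr x y z : dot x (y + z) = dot x y + dot x z.
Proof. by rewrite !dotE -big_split; apply: eq_bigr => l _; rewrite mxE mulrDr. Qed.

Lemma dotZr a x y : dot x (a *: y) = a * dot x y.
Proof. by rewrite !dotE mulr_sumr; apply: eq_bigr => l _; rewrite mxE mulrCA. Qed.

Lemma dotDl x y z : dot (y + z) x = dot y x + dot z x.
Proof. by rewrite dotC dotDr !(dotC x). Qed.

Lemma dotZl a x y : dot (a *: y) x = a * dot y x.
Proof. by rewrite dotC dotZr dotC. Qed.

Lemma dotNN x : dot (- x) (- x) = dot x x.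
Proof. by rewrite -scaleN1r dotZl dotZr mulN1r mulNr opprK mul1r. Qed.

Lemma dot_ge0 x : 0 <= dot x x.
Proof. by rewrite dotE; apply: sumr_ge0 => l _; rewrite -expr2 sqr_ge0. Qed.

Lemma enormE x : enorm x = Num.sqrt (dot x x).
Proof. by rewrite /enorm dotE; congr Num.sqrt; apply: eq_bigr => l _; rewrite expr2. Qed.

Lemma unit_dot v : enorm v = 1 -> dot v v = 1.
Proof. by rewrite enormE => h; rewrite -(sqr_sqrtr (dot_ge0 v)) h expr1n. Qed.

Lemma dot_mulmx m v (u : 'rV[R]_m) (A : 'M[R]_(m, n)) :
  dot v (u *m A) = \sum_k u 0 k * dot v (row k A).
Proof.
rewrite dotE; under eq_bigr => l _ do rewrite mxE big_distrr /=.
rewrite exchange_big /=; apply: eq_bigr => k _.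
by rewrite dotE big_distrr /=; apply: eq_bigr => l _; rewrite !mxE mulrCA.
Qed.

Lemma dot_rows m p (A : 'M[R]_(m, n)) (B : 'M[R]_(p, n)) i j :
  dot (row i A) (row j B) = (A *m B^T) i j.
Proof. by rewrite dotE mxE; apply: eq_bigr => l _; rewrite !mxE. Qed.

End InnerProduct.

Section SmallParameters.
Variable R : realFieldType.

Definition small_enough (P : R -> Prop) : Prop :=
  exists2 d, 0 < d & forall s, 0 < s -> s < d -> P s.

Lemma small_enough_and (P Q : R -> Prop) :
  small_enough P -> small_enough Q -> small_enough (fun s => P s /\ Q s).
Proof.
move=> [d1 d10 H1] [d2 d20 H2]; exists (Num.min d1 d2); first by rewrite lt_min d10.
by move=> s s0; rewrite lt_min => /andP[s1 s2]; split; [apply: H1 | apply: H2].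
Qed.

Lemma small_enough_all (T : eqType) (r : seq T) (P : T -> R -> Prop) :
  (forall x, x \in r -> small_enough (P x)) ->
  small_enough (fun s => forall x, x \in r -> P x s).
Proof.
elim: r => [|a r IHr] H; first by exists 1 => // s _ _ x; rewrite in_nil.
have [d d0 Hd] := small_enough_and (H a (mem_head _ _))
  (IHr (fun x xr => H x (@mem_behead _ (a :: r) x xr))).
exists d => // s s0 sd x; rewrite in_cons => /orP[/eqP -> | xr].
  by have [] := Hd s s0 sd.
by have [_ ] := Hd s s0 sd; apply.
Qed.

Lemma small_enough_witness (P : R -> Prop) : small_enough P -> exists s, P s.
Proof.
move=> [d d0 Hd]; have [h0 hd] := midf_lt d0; rewrite add0r in h0 hd.
by exists (d / 2); apply: Hd.
Qed.

End SmallParameters.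

Section MinimalFrame.
Variables (R : rcfType) (n : nat) (S : seq 'rV[R]_n).

Definition rows (M : 'M[R]_n) : seq 'rV[R]_n := [seq row i M | i <- enum 'I_n].

Lemma rows_basis M : M \in unitmx -> basis_of fullv (rows M).
Proof.
move=> uM; rewrite basisEdim; apply/andP; split.
  apply/subvP => x _; rewrite -(mulmxKV uM x) mulmx_sum_row.
  by apply: memv_suml => i _; apply/memvZ/memv_span/map_f; rewrite mem_enum.
by rewrite size_map size_enum_ord dimvf (dim_matrix R 1 n) mul1r.
Qed.

Definition frame (g : 'I_n -> 'I_(size S)) : 'M[R]_n := \matrix_(i, j) S`_(g i) 0 j.

Lemma row_frame g i : row i (frame g) = S`_(g i).
Proof. by apply/rowP => j; rewrite !mxE. Qed.

Lemma exists_invertible_frame : <<S>>%VS = fullv ->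
  exists g : {ffun 'I_n -> 'I_(size S)}, \det (frame g) != 0.
Proof.
move=> hspan; pose Sm : 'M[R]_(size S, n) := \matrix_(i, j) S`_i 0 j.
have rf : row_full Sm.
  rewrite -sub1mx; apply/row_subP => i.
  have : row i (1%:M : 'M[R]_n) \in <<in_tuple S>>%VS by rewrite /= hspan memvf.
  move/coord_span => ->; set c := coord _.
  have -> : \sum_k c k (row i 1%:M) *: (in_tuple S)`_k = (\row_k c k (row i 1%:M)) *m Sm.
    rewrite mulmx_sum_row; apply: eq_bigr => k _; rewrite mxE; congr (_ *: _).
    by apply/rowP => j; rewrite !mxE.
  by rewrite submxMl.
exists (fullrankfun rf); have := fullrowsub_unit rf; rewrite unitmxE unitfE.
by congr (_ != 0); congr (\det _); apply/matrixP => i j; rewrite !mxE.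
Qed.

Lemma det_replace_row (M : 'M[R]_n) k (v : 'rV[R]_n) : M \in unitmx ->
  \det (\matrix_(i, j) if i == k then v 0 j else M i j) = (v *m invmx M) 0 k * \det M.
Proof.
move=> uM; rewrite (expand_det_row _ k) /invmx uM -scalemxAr mxE mulrAC mulVf ?mul1r;
  last by rewrite -unitfE -unitmxE.
rewrite mxE; apply: eq_bigr => j _; rewrite mxE eqxx mxE; congr (_ * _).
rewrite /cofactor; congr (_ * _); congr (\det _); apply/matrixP => a b.
by rewrite !mxE eq_sym (negbTE (neq_lift _ _)).
Qed.

(* A frame of minimal nonzero |det|: every vector of S has coordinates of
   absolute value 0 or at least 1 in the basis of its rows. *)
Lemma exists_minimal_frame : <<S>>%VS = fullv ->
  exists M : 'M[R]_n, [/\ M \in unitmx, forall k, row k M \in S &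
    forall v, v \in S -> forall k, (v *m invmx M) 0 k != 0 -> 1 <= `|(v *m invmx M) 0 k|].
Proof.
move=> /exists_invertible_frame [g0 Hg0].
have [g Hg Hmin] := @arg_minP _ _ _ g0 (fun h => \det (frame h) != 0)
  (fun h => `|\det (frame h)|) Hg0.
have uM : frame g \in unitmx by rewrite unitmxE unitfE.
exists (frame g); split => // [k | v vS k ck]; first by rewrite row_frame mem_nth.
have vS' : (index v S < size S)%N by rewrite index_mem.
pose h : {ffun 'I_n -> 'I_(size S)} := [ffun i => if i == k then Ordinal vS' else g i].
have hdet : \det (frame h) = (v *m invmx (frame g)) 0 k * \det (frame g).
  rewrite -det_replace_row //; congr (\det _); apply/matrixP => i j; rewrite !mxE ffunE.
  by case: (i == k); rewrite //= nth_index.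
have := Hmin h; rewrite hdet mulf_neq0 // => /(_ isT).
by rewrite normrM ler_pMl // normr_gt0.
Qed.

(* A unit vector v = c M which is not +-(a row of M), and whose nonzero
   coordinates all have absolute value >= 1, has |c| > 1: otherwise c has a
   single nonzero coordinate, equal to +-1. *)
Lemma coord_norm_gt1 (M : 'M[R]_n) (c : 'rV[R]_n) :
  (forall k, c 0 k != 0 -> 1 <= `|c 0 k|) -> dot (c *m M) (c *m M) = 1 ->
  (forall k, c *m M != row k M /\ c *m M != - row k M) -> 1 < dot c c.
Proof.
move=> hc hv hnot; rewrite ltNge; apply/negP => hle.
have [k hk] : exists k, c 0 k != 0.
  have [k0 hk0|h0] := pickP (fun k : 'I_n => c 0 k != 0); first by exists k0.
  have c0 : c = 0 by apply/rowP => k; rewrite mxE; move/negbFE/eqP: (h0 k).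
  move: hv; rewrite c0 mul0mx dotE big1 => [/esym/eqP|l _]; last by rewrite mxE mul0r.
  by rewrite oner_eq0.
have hk1 : 1 <= c 0 k ^+ 2 by rewrite -(real_normK (num_real _)) expr_ge1 // hc.
have hsplit := dotE c c; rewrite (bigD1 k) //= -expr2 in hsplit.
have hsq_ge0 i : 0 <= c 0 i * c 0 i by rewrite -expr2 sqr_ge0.
have hrest0 : \sum_(i | i != k) c 0 i * c 0 i = 0.
  apply/le_anti/andP; split; last exact: sumr_ge0.
  by rewrite -(lerD2l (c 0 k ^+ 2)) addr0 -hsplit (le_trans hle).
have ci0 i : i != k -> c 0 i = 0.
  move=> ik; have /eqP := psumr_eq0P (fun j _ => hsq_ge0 j) hrest0 ik.
  by rewrite mulf_eq0 orbb => /eqP.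
have /eqP : c 0 k ^+ 2 = 1.
  by apply/le_anti; rewrite hk1 (le_trans _ hle) // hsplit hrest0 addr0.
have hcM : c *m M = c 0 k *: row k M.
  by rewrite mulmx_sum_row (bigD1 k) //= big1 ?addr0 // => i /ci0 ->; rewrite scale0r.
have [h1 h2] := hnot k; rewrite sqrf_eq1 => /orP[] /eqP hck.
  by move: h1; rewrite hcM hck scale1r eqxx.
by move: h2; rewrite hcM hck scaleN1r eqxx.
Qed.

End MinimalFrame.

Lemma inv_sqrt1D_dist (R : rcfType) (x : R) : 0 <= x -> `|(Num.sqrt (1 + x))^-1 - 1| <= x.
Proof.
move=> x0; set r := Num.sqrt (1 + x).
have r1 : 1 <= r by rewrite /r -{1}sqrtr1 ler_sqrt ?lerDl // addr_ge0.
have r0 : 0 < r := lt_le_trans ltr01 r1.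
have -> : `|r^-1 - 1| = (r - 1) * r^-1.
  by rewrite distrC ger0_norm ?subr_ge0 ?invf_le1 // mulrBl mul1r divff // gt_eqF.
apply: (le_trans (y := r - 1)); first by rewrite ler_piMr ?subr_ge0 ?invf_le1.
have r2 : r ^+ 2 = 1 + x by rewrite sqr_sqrtr // addr_ge0.
by rewrite lerBlDl -r2 expr2 ler_peMl // ltW.
Qed.

Lemma tilt_entry_dist (R : realFieldType) (d a z s q : R) : 0 < s -> s <= 1 -> 0 <= q ->
  `|d - 1| <= s ^+ 2 * q -> `|d * (a + s * z) - a| <= s * (`|z| + q * (`|a| + `|z|)).
Proof.
move=> s0 s1 q0 hd.
have haz : `|a + s * z| <= `|a| + `|z|.
  by rewrite (le_trans (ler_normD _ _)) // lerD2l normrM gtr0_norm // ler_piMl.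
have -> : d * (a + s * z) - a = s * z + (d - 1) * (a + s * z).
  by rewrite mulrBl mul1r addrCA opprD [s * z + _]addrCA subrr addr0.
rewrite (le_trans (ler_normD _ _)) // [in X in _ <= X]mulrDr; apply: lerD.
  by rewrite normrM gtr0_norm.
rewrite normrM (le_trans (ler_pM (normr_ge0 _) (normr_ge0 _) hd haz)) // -mulrA.
rewrite ler_wpM2r ?mulr_ge0 ?addr_ge0 // expr2 ler_piMl //; exact: ltW.
Qed.

Section Deformation.
Variables (R : rcfType) (n : nat) (M : 'M[R]_n).
Hypothesis uM : M \in unitmx.
Hypothesis unit_rows : forall k, dot (row k M) (row k M) = 1.
Implicit Types (v : 'rV[R]_n) (s : R).

(* Row k is z_k = b'_k - b_k, the k-th dual basis vector minus the k-th row. *)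
Definition defect : 'M[R]_n := (invmx M)^T - M.

Definition defect_sq k : R := dot (row k defect) (row k defect).

Definition tilt (s : R) : 'M[R]_n := M + s *: defect.

(* The factor 1 / |b_k + s z_k| (see norm_row_tilted_frame). *)
Definition renorm (s : R) k : R := (Num.sqrt (1 + s ^+ 2 * defect_sq k))^-1.

Definition tilted_frame (s : R) : 'M[R]_n := diag_mx (\row_k renorm s k) *m tilt s.

Definition deform (s : R) : 'M[R]_n := invmx M *m tilted_frame s.

Lemma defect_sq_ge0 k : 0 <= defect_sq k.
Proof. exact: dot_ge0. Qed.

Lemma row_tilt s k : row k (tilt s) = row k M + s *: row k defect.
Proof. by apply/rowP => j; rewrite !mxE. Qed.

Lemma row_tilted_frame s k : row k (tilted_frame s) = renorm s k *: row k (tilt s).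
Proof. by apply/rowP => j; rewrite /tilted_frame mul_diag_mx !mxE. Qed.

Lemma row_deform s k : row k M *m deform s = row k (tilted_frame s).
Proof. by rewrite /deform -row_mul mulmxA mulmxV // mul1mx. Qed.

Lemma trmx_defect : defect^T = invmx M - M^T.
Proof. by rewrite /defect raddfB /= trmxK. Qed.

(* z_k is orthogonal to b_k, as b_k . b'_k = 1 = b_k . b_k. *)
Lemma dot_row_defect k : dot (row k M) (row k defect) = 0.
Proof.
rewrite dot_rows trmx_defect mulmxBr mulmxV // mxE [(- (_ : 'M_n)) k k]mxE.
by rewrite -dot_rows unit_rows mxE eqxx subrr.
Qed.

Lemma norm_row_tilted_frame s k : dot (row k (tilted_frame s)) (row k (tilted_frame s)) = 1.
Proof.
have q0 : 0 <= s ^+ 2 * defect_sq k by rewrite mulr_ge0 ?sqr_ge0 ?defect_sq_ge0.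
rewrite row_tilted_frame row_tilt dotZl dotZr !dotDl !dotDr !dotZl !dotZr.
rewrite unit_rows (dotC _ (row k M)) dot_row_defect !mulr0 addr0 add0r -/(defect_sq k).
rewrite mulrA -expr2 /renorm exprVn sqr_sqrtr ?addr_ge0 // mulrA -expr2 mulVf //.
by rewrite gt_eqF // ltr_pwDl.
Qed.

(* For v = c M, the first-order change v . (c Z) equals |c|^2 - |v|^2. *)
Lemma dot_coord_defect v :
  dot v ((v *m invmx M) *m defect) = dot (v *m invmx M) (v *m invmx M) - dot v v.
Proof.
rewrite /dot trmx_mul trmx_defect mulmxBl mulmxBr mulmxA -trmx_mul mulmxKV //.
by rewrite !mxE.
Qed.

Lemma renorm_dist s k : `|renorm s k - 1| <= s ^+ 2 * defect_sq k.
Proof. by apply: inv_sqrt1D_dist; rewrite mulr_ge0 ?sqr_ge0 ?defect_sq_ge0. Qed.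

Definition renorm_error v s : 'rV[R]_n := \row_k ((v *m invmx M) 0 k * (renorm s k - 1)).

Lemma deform_expand v s :
  v *m deform s = v + (s *: ((v *m invmx M) *m defect) + renorm_error v s *m tilt s).
Proof.
rewrite /deform /tilted_frame !mulmxA.
have -> : v *m invmx M *m diag_mx (\row_k renorm s k) = v *m invmx M + renorm_error v s.
  by apply/rowP => k; rewrite mul_mx_diag !mxE mulrBr mulr1 addrC subrK.
by rewrite mulmxDl {1}/tilt mulmxDr -scalemxAr mulmxKV // addrA.
Qed.

(* The constant K of the bound |v . (error) tilt s| <= s^2 K. *)
Definition error_const v : R := \sum_k `|(v *m invmx M) 0 k| * defect_sq k *
  (`|dot v (row k M)| + `|dot v (row k defect)|).

Lemma error_const_ge0 v : 0 <= error_const v.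
Proof. by apply: sumr_ge0 => k _; rewrite !mulr_ge0 ?defect_sq_ge0 ?addr_ge0. Qed.

Lemma renorm_error_bound v s : 0 < s -> s <= 1 ->
  `|dot v (renorm_error v s *m tilt s)| <= s ^+ 2 * error_const v.
Proof.
move=> s0 s1; rewrite dot_mulmx /error_const mulr_sumr.
apply: (le_trans (ler_norm_sum _ _ _)); apply: ler_sum => k _.
rewrite normrM row_tilt dotDr dotZr.
have hu : `|renorm_error v s 0 k| <= `|(v *m invmx M) 0 k| * (s ^+ 2 * defect_sq k).
  by rewrite mxE normrM ler_wpM2l ?renorm_dist.
have hab : `|dot v (row k M) + s * dot v (row k defect)| <=
           `|dot v (row k M)| + `|dot v (row k defect)|.
  by rewrite (le_trans (ler_normD _ _)) // lerD2l normrM gtr0_norm // ler_piMl.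
apply: (le_trans (ler_pM (normr_ge0 _) (normr_ge0 _) hu hab)).
by rewrite mulrA (mulrC `|_|) -!mulrA.
Qed.

(* A unit vector with |c| > 1 is strictly stretched by F_s for small s > 0:
   the gain 2 s (|c|^2 - 1) dominates the O(s^2) error. *)
Lemma deform_stretches v : dot v v = 1 -> 1 < dot (v *m invmx M) (v *m invmx M) ->
  small_enough (fun s => 1 < dot (v *m deform s) (v *m deform s)).
Proof.
set c := v *m invmx M => hv hc.
set g := dot c c - 1; have g0 : 0 < g by rewrite subr_gt0.
have K1 : 0 < error_const v + 1 by rewrite ltr_wpDl ?error_const_ge0.
exists (Num.min 1 (g / (error_const v + 1))); first by rewrite lt_min ltr01 divr_gt0.
move=> s s0; rewrite lt_min => /andP[s1 sK]; rewrite ltr_pdivlMr // in sK.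
rewrite deform_expand; set E := s *: _ + _.
have hvE : 0 < dot v E.
  rewrite dotDr dotZr dot_coord_defect -/c hv -/g.
  have := renorm_error_bound v s0 (ltW s1); rewrite ler_norml => /andP[hl _].
  apply: lt_le_trans (lerD (lexx _) hl).
  rewrite subr_gt0 expr2 -mulrA ltr_pM2l //.
  by apply: le_lt_trans sK; rewrite mulrDr mulr1 lerDl ltW.
clearbody E; rewrite dotDl !dotDr hv (dotC E v) -addrA ltrDl.
by rewrite addr_gt0 // ltr_wpDr // dot_ge0.
Qed.

(* Each entry of F_s tends to the corresponding entry of the identity:
   |F_s - 1| <= s C entrywise, since F_s - 1 = M^-1 (W_s - M). *)
Lemma deform_entry_near eps i j : 0 < eps ->
  small_enough (fun s => `|deform s i j - (1%:M : 'M[R]_n) i j| < eps).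
Proof.
move=> e0.
set C := \sum_k `|invmx M i k| * (`|defect k j| + defect_sq k * (`|M k j| + `|defect k j|)).
have C1 : 0 < C + 1.
  rewrite ltr_wpDl //; apply: sumr_ge0 => k _.
  by rewrite mulr_ge0 ?addr_ge0 ?mulr_ge0 ?addr_ge0 ?defect_sq_ge0.
exists (Num.min 1 (eps / (C + 1))); first by rewrite lt_min ltr01 divr_gt0.
move=> s s0; rewrite lt_min => /andP[s1 sC]; rewrite ltr_pdivlMr // in sC.
rewrite -(mulVmx uM) /deform !mxE -sumrB.
apply: (le_lt_trans (ler_norm_sum _ _ _)); apply: (le_lt_trans (y := s * C)); last first.
  by apply: le_lt_trans sC; rewrite ler_pM2l // lerDl.
rewrite /C mulr_sumr; apply: ler_sum => k _.
rewrite -mulrBr normrM mulrCA ler_wpM2l // /tilted_frame mul_diag_mx !mxE.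
exact: tilt_entry_dist (ltW s1) (defect_sq_ge0 k) (renorm_dist s k).
Qed.

Lemma deform_near_id eps : 0 < eps ->
  small_enough (fun s => forall i j, `|deform s i j - (1%:M : 'M[R]_n) i j| < eps).
Proof.
move=> e0; have [d d0 Hd] := @small_enough_all _ _ (enum {: 'I_n * 'I_n})
  (fun p s => `|deform s p.1 p.2 - (1%:M : 'M[R]_n) p.1 p.2| < eps)
  (fun p _ => deform_entry_near p.1 p.2 e0).
by exists d => // s s0 sd i j; apply: (Hd s s0 sd (i, j)); rewrite mem_enum.
Qed.

Lemma deform_spec v : dot v v = 1 ->
  (forall k, (v *m invmx M) 0 k != 0 -> 1 <= `|(v *m invmx M) 0 k|) ->
  small_enough (fun s => if (v \in rows M) || (- v \in rows M)
    then enorm (v *m deform s) = enorm v else enorm v < enorm (v *m deform s)).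
Proof.
move=> hv hc; case hB : ((v \in rows M) || (- v \in rows M)).
  exists 1 => // s _ _; rewrite !enormE.
  case/orP: hB => /mapP[k _ hk].
    by rewrite hk row_deform norm_row_tilted_frame unit_rows.
  by rewrite -[v]opprK hk mulNmx !dotNN row_deform norm_row_tilted_frame unit_rows.
have hnot k : v != row k M /\ v != - row k M.
  have hk : row k M \in rows M by apply: map_f; rewrite mem_enum.
  by split; apply/eqP => hvk; move: hB; rewrite hvk ?opprK hk ?orbT.
have hgt : 1 < dot (v *m invmx M) (v *m invmx M).
  by apply: (coord_norm_gt1 (M := M)) hc _ _; rewrite mulmxKV.
have [d d0 Hd] := deform_stretches hv hgt.
exists d => // s s0 sd; have h := Hd s s0 sd.
rewrite !enormE hv sqrtr1 -{1}sqrtr1 ltr_sqrt //; exact: lt_trans ltr01 h.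
Qed.
End Deformation.

Unset Implicit Arguments.

Theorem mainTheorem6 (R : rcfType) (n : nat) (S : seq 'rV[R]_n)
  (hunit : forall v, v \in S -> enorm v = 1)
  (hspan : (<<S>>)%VS = fullv)
  (hsym : forall v, v \in S -> - v \in S) :
  exists B : seq 'rV[R]_n,
    [/\ basis_of fullv B, {subset B <= S} &
      forall eps : R, 0 < eps ->
        exists F : 'M[R]_n,
          (forall i j, `|F i j - (1%:M : 'M[R]_n) i j| < eps) /\
          (forall v, v \in S ->
             if (v \in B) || (- v \in B)
             then enorm (v *m F) = enorm v
             else enorm v < enorm (v *m F))].
Proof.
have [M [uM rowsS hcoord]] := exists_minimal_frame hspan.
have unit_rows k : dot (row k M) (row k M) = 1 by apply/unit_dot/hunit.
exists (rows M); split; [exact: rows_basis | by move=> _ /mapP[k _ ->] | move=> eps e0].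
have spec_S := small_enough_all (fun v vS =>
  deform_spec uM unit_rows (unit_dot (hunit v vS)) (hcoord v vS)).
have [s [near_id hS]] := small_enough_witness (small_enough_and (deform_near_id uM e0) spec_S).
by exists (deform M s); split.
Qed.
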